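(* Let $G$ be a non-trivial graph with $m$ edges, maximum degree $\Delta$ and minimum degree $\delta$. Then $$ GA_1(\mathcal{L}(G)) \ge \min \Big\{ \, \frac{1}{4(\Delta-1)} \,,\, \frac{\sqrt{ (\Delta-1)(\delta-1)}}{(\Delta+\delta-2)^2} \, \Big\} \big(4m - 4M_1(G) +2 M_2(G) + F(G)\big) . $$
   Context: All graphs are finite and simple. A graph is non-trivial if each of its connected components has at least two edges. $d_u$ is the degree of $u$. $M_1(G)=\sum_{u\in V(G)}d_u^2$, $M_2(G)=\sum_{uv\in E(G)}d_ud_v$, $F(G)=\sum_{u\in V(G)}d_u^3$ (forgotten index), and $GA_1(G)=\sum_{uv\in E(G)}\frac{\sqrt{d_ud_v}}{\frac12(d_u+d_v)}$. The line graph $\mathcal{L}(G)$ has vertex set $E(G)$, two vertices being adjacent iff the corresponding edges share an end vertex in $G$. *)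

From HB Require Import structures.
From mathcomp Require Import all_boot all_order all_algebra.
Set Implicit Arguments. Unset Strict Implicit. Unset Printing Implicit Defensive.
Import Order.TTheory GRing.Theory Num.Theory.
Local Open Scope ring_scope.

(* A finite simple graph is a symmetric irreflexive relation e on a finType T. *)

Definition deg (T : finType) (e : rel T) (x : T) : nat := #|[set y | e x y]|.

Definition edge_set (T : finType) (e : rel T) : {set {set T}} :=
  [set [set p.1; p.2] | p in [set p : T * T | e p.1 p.2]].

Definition nedges (T : finType) (e : rel T) : nat := #|edge_set e|.

Definition nontrivial (T : finType) (e : rel T) : Prop :=
  forall x : T,
    (1 < #|[set f in edge_set e | f \subset [set y | connect e x y]]|)%N.

Definition M1 (T : finType) (e : rel T) : nat := \sum_(x : T) deg e x ^ 2.
Definition Fidx (T : finType) (e : rel T) : nat := \sum_(x : T) deg e x ^ 3.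
(* each edge f = {u,v} has exactly two elements, so the product is d_u d_v *)
Definition M2 (T : finType) (e : rel T) : nat :=
  \sum_(f in edge_set e) \prod_(x in f) deg e x.

Definition GA1 (R : rcfType) (T : finType) (e : rel T) : R :=
  \sum_(f in edge_set e)
     Num.sqrt (\prod_(x in f) (deg e x)%:R) / ((\sum_(x in f) (deg e x)%:R) / 2).

Definition line_vertex (T : finType) (e : rel T) := {f : {set T} | f \in edge_set e}.
Definition line_rel (T : finType) (e : rel T) : rel (line_vertex e) :=
  fun f g => (val f != val g) && ~~ [disjoint val f & val g].
Arguments line_rel {T} e.
Arguments GA1 R {T} e.

(* In the line graph the edge uv has degree D = d_u + d_v - 2, which lies in
   [2δ - 2, 2Δ - 2], and the squares of these degrees add up to
   4m - 4M_1 + 2M_2 + F; counting in the line graph, the same sum is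
   Σ (D_g + D_h) over its edges gh.  It therefore suffices to show, term by
   term, that 2√(ab)/(a + b) ≥ c(a + b), i.e. c²(a + b)⁴/(ab) ≤ 4.  Since
   t ↦ (s + t)⁴/(st) decreases up to t = s/3 and increases afterwards, on the
   square [2δ - 2, 2Δ - 2]² the function (a + b)⁴/(ab) is largest at one of
   the corners (2Δ - 2, 2Δ - 2) and (2δ - 2, 2Δ - 2), which yield the two
   terms of the minimum. *)

From HB Require Import structures.
From mathcomp Require Import all_boot all_order all_algebra.
From mathcomp Require Import ring lra.
Set Implicit Arguments. Unset Strict Implicit. Unset Printing Implicit Defensive.
Import Order.TTheory GRing.Theory Num.Theory.
Local Open Scope ring_scope.

Section QuartRatio.
Variable R : realFieldType.
Implicit Types s t u a b L H : R.

Definition quart_ratio a b := (a + b) ^+ 4 / (a * b).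

Lemma quart_ratioC a b : quart_ratio a b = quart_ratio b a.
Proof. by rewrite /quart_ratio [a + b]addrC [a * b]mulrC. Qed.

Lemma quart_ratio_diff s t u : 0 < s -> 0 < t -> 0 < u ->
  quart_ratio s u - quart_ratio s t
  = (u - t) * (t * u * (6 * s ^+ 2 + 4 * s * (t + u) + t ^+ 2 + t * u + u ^+ 2) - s ^+ 4)
    / (s * t * u).
Proof.
move=> s0 t0 u0; rewrite /quart_ratio; field.
all: by rewrite ?gt_eqF.
Qed.

Lemma quart_ratio_monotone s t u : 0 < s -> s <= 3 * t -> t <= u ->
  quart_ratio s t <= quart_ratio s u.
Proof.
move=> s0 st tu; have t0 : 0 < t by lra.
have u0 : 0 < u by lra.
rewrite -subr_ge0 quart_ratio_diff //.
apply: divr_ge0; last by rewrite !mulr_ge0 // ltW.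
apply: mulr_ge0; first lra.
rewrite subr_ge0.
(* For [t, u >= s / 3]: [t * u >= s ^+ 2 / 9] and the bracket is [>= 9 * s ^+ 2]. *)
have -> : s ^+ 4 = s ^+ 2 / 9 * (9 * s ^+ 2) by field.
apply: ler_pM; first by rewrite divr_ge0 ?sqr_ge0.
- by rewrite mulr_ge0 ?sqr_ge0.
- nra.
- nra.
Qed.

Lemma quart_ratio_antitone s t u : 0 < t -> t <= u -> 3 * u <= s ->
  quart_ratio s u <= quart_ratio s t.
Proof.
move=> t0 tu us; have u0 : 0 < u by lra.
have s0 : 0 < s by lra.
rewrite -subr_le0 quart_ratio_diff //.
apply: mulr_le0_ge0; last by rewrite invr_ge0 !mulr_ge0 // ltW.
apply: mulr_ge0_le0; first lra.
rewrite subr_le0.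
have -> : s ^+ 4 = s ^+ 2 / 9 * (9 * s ^+ 2) by field.
apply: ler_pM; first by rewrite mulr_ge0 // ltW.
- nra.
- nra.
- nra.
Qed.

Lemma quart_ratio_box L H a b :
  0 < L -> L <= a <= H -> L <= b <= H ->
  quart_ratio a b <= Num.max (quart_ratio L H) (quart_ratio H H).
Proof.
wlog ab : a b / a <= b.
  move=> W L0 Ha Hb; have [/W|/ltW /W] := leP a b; first exact.
  by rewrite quart_ratioC; apply.
move=> L0 /andP[La aH] /andP[_ bH].
have a0 : 0 < a by lra.
apply: le_trans (quart_ratio_monotone a0 _ bH) _; first lra.
rewrite quart_ratioC le_max.
have [Ha|Ha] := lerP H (3 * a).
  by rewrite quart_ratio_monotone ?orbT //; lra.
by rewrite [quart_ratio L H]quart_ratioC quart_ratio_antitone // ltW.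
Qed.
End QuartRatio.

Section GATerm.
Variable R : rcfType.
Implicit Types p q c a b : R.

Lemma sqr_coef_quart_ratio_le p q c a b :
  0 < q -> 0 <= c -> c <= 1 / (4 * p) -> c <= Num.sqrt (p * q) / (p + q) ^+ 2 ->
  2 * q <= a <= 2 * p -> 2 * q <= b <= 2 * p -> c ^+ 2 * quart_ratio a b <= 4.
Proof.
move=> q0 c0 c_p c_pq qap qbp.
have p0 : 0 < p by case/andP: qap; lra.
have pq0 : 0 < p + q by lra.
have corner_qp : c ^+ 2 * quart_ratio (2 * q) (2 * p) <= 4.
  have c2_le : c ^+ 2 <= p * q / (p + q) ^+ 4.
    have pq_ge0 : 0 <= p * q by rewrite mulr_ge0 // ltW.
    rewrite -[p * q]sqr_sqrtr // (exprM _ 2 2) -expr_div_n.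
    by rewrite lerXn2r ?nnegrE ?divr_ge0 ?sqrtr_ge0 ?sqr_ge0.
  apply: le_trans (ler_wpM2r _ c2_le) _.
    by rewrite /quart_ratio divr_ge0 ?exprn_ge0 ?mulr_ge0 //; lra.
  suff -> : p * q / (p + q) ^+ 4 * quart_ratio (2 * q) (2 * p) = 4 by [].
  by rewrite /quart_ratio; field; rewrite ?mulf_neq0 ?expf_neq0 ?gt_eqF.
have corner_pp : c ^+ 2 * quart_ratio (2 * p) (2 * p) <= 4.
  have c2_le : c ^+ 2 <= (1 / (4 * p)) ^+ 2.
    by rewrite lerXn2r ?nnegrE ?divr_ge0 ?mulr_ge0 //; lra.
  apply: le_trans (ler_wpM2r _ c2_le) _.
    by rewrite /quart_ratio divr_ge0 ?exprn_ge0 ?mulr_ge0 //; lra.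
  suff -> : (1 / (4 * p)) ^+ 2 * quart_ratio (2 * p) (2 * p) = 4 by [].
  by rewrite /quart_ratio; field; rewrite gt_eqF.
have q2 : 0 < 2 * q by lra.
move/(ler_wpM2l (sqr_ge0 c)): (quart_ratio_box q2 qap qbp) => /le_trans; apply.
by rewrite maxr_pMr ?sqr_ge0 // ge_max corner_qp corner_pp.
Qed.

Lemma le_ga_term c a b : 0 <= c -> 0 < a -> 0 < b ->
  c ^+ 2 * quart_ratio a b <= 4 -> c * (a + b) <= Num.sqrt (a * b) / ((a + b) / 2).
Proof.
move=> c0 a0 b0; rewrite /quart_ratio [_ * (_ / _)]mulrA ler_pdivrMr ?mulr_gt0 //.
move=> c2_ab; rewrite ler_pdivlMr; last lra.
have lhs0 : 0 <= c * (a + b) * ((a + b) / 2) by rewrite !mulr_ge0 //; lra.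
rewrite -(ger0_norm lhs0) -[Num.sqrt _]ger0_norm ?sqrtr_ge0 // -!sqrtr_sqr.
rewrite ler_sqrt ?sqr_ge0 // sqr_sqrtr; last by rewrite mulr_ge0 // ltW.
have -> : (c * (a + b) * ((a + b) / 2)) ^+ 2 = c ^+ 2 * (a + b) ^+ 4 / 4 by field.
by rewrite ler_pdivrMr // [_ * 4]mulrC.
Qed.

Lemma ga_term_ge p q a b :
  2 * q <= a <= 2 * p -> 2 * q <= b <= 2 * p -> 0 <= a -> 0 <= b ->
  Num.min (1 / (4 * p)) (Num.sqrt (p * q) / (p + q) ^+ 2) * (a + b)
  <= Num.sqrt (a * b) / ((a + b) / 2).
Proof.
set c := Num.min _ _ => qap qbp a0 b0.
(* A nonpositive coefficient (e.g. [p = 0], where [1 / 0 = 0]) makes the bound trivial. *)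
have [c_le0|c_pos] := lerP c 0.
  apply: le_trans (_ : 0 <= _); first by rewrite mulr_le0_ge0 ?addr_ge0.
  by rewrite divr_ge0 ?sqrtr_ge0 ?divr_ge0 ?addr_ge0.
have [c_p c_pq] : c <= 1 / (4 * p) /\ c <= Num.sqrt (p * q) / (p + q) ^+ 2.
  by apply/andP; rewrite -le_min.
have p0 : 0 < p.
  by move: (lt_le_trans c_pos c_p); rewrite mul1r invr_gt0 pmulr_rgt0.
have q0 : 0 < q.
  have : 0 < Num.sqrt (p * q).
    move: (lt_le_trans c_pos c_pq); apply: contraTT; rewrite -!leNgt => sq0.
    by rewrite mulr_le0_ge0 // invr_ge0 sqr_ge0.
  by rewrite sqrtr_gt0 pmulr_rgt0.
have [a_pos b_pos] : 0 < a /\ 0 < b by case/andP: qap; case/andP: qbp; split; lra.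
apply: le_ga_term => //; first exact: ltW.
exact: sqr_coef_quart_ratio_le (ltW c_pos) c_p c_pq qap qbp.
Qed.
End GATerm.

Section TwoSets.
Variable T : finType.
Implicit Types (x y : T) (f g : {set T}).

Lemma big_set2 (R : Type) (idx : R) (op : Monoid.com_law idx) (F : T -> R) x y :
  x != y -> \big[op/idx]_(z in [set x; y]) F z = op (F x) (F y).
Proof. by move=> xy; rewrite big_setU1 ?big_set1 // inE. Qed.

Lemma set2_injr x y y' : x != y -> [set x; y] = [set x; y'] -> y = y'.
Proof.
move=> xy E; have : y \in [set x; y'] by rewrite -E set22.
by rewrite in_set2 eq_sym (negbTE xy) => /eqP.
Qed.

Lemma card2_setI_le1 f g : #|f| = 2%N -> #|g| = 2%N -> f != g -> (#|f :&: g| <= 1)%N.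
Proof.
move=> f2 g2; apply: contraNT; rewrite -ltnNge => fg2.
have fgf : f :&: g = f by apply/eqP; rewrite eqEcard subsetIl f2.
have fgg : f :&: g = g by apply/eqP; rewrite eqEcard subsetIr g2.
by rewrite -fgf fgg.
Qed.

Lemma sqr_sum_set2 (R : comNzRingType) (F : T -> R) x y : x != y ->
  (\sum_(z in [set x; y]) F z) ^+ 2
  = \sum_(z in [set x; y]) F z ^+ 2 + 2 * \prod_(z in [set x; y]) F z.
Proof. by move=> xy; rewrite !big_set2 //=; ring. Qed.
End TwoSets.

Section SimpleGraph.
Variables (T : finType) (e : rel T).
Hypotheses (e_sym : symmetric e) (e_irr : irreflexive e).

Lemma edge_setP f :
  reflect (exists2 p : T * T, e p.1 p.2 & f = [set p.1; p.2]) (f \in edge_set e).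
Proof.
apply: (iffP imsetP) => -[p Hp ->]; exists p => //; first by rewrite inE in Hp.
by rewrite inE.
Qed.

Lemma adj_neq x y : e x y -> x != y.
Proof. by apply: contraTneq => ->; rewrite e_irr. Qed.

Lemma card_edge f : f \in edge_set e -> #|f| = 2%N.
Proof. by case/edge_setP=> p /adj_neq p12 ->; rewrite cards2 p12. Qed.

Lemma card_edges_at x : #|[set f in edge_set e | x \in f]| = deg e x.
Proof.
have -> : [set f in edge_set e | x \in f] = [set [set x; y] | y in [set y | e x y]].
  apply/setP => f; rewrite !inE; apply/andP/imsetP => [[/edge_setP[[a b] /= ab ->]]|].
    rewrite in_set2 => /orP[]/eqP ->; first by exists b; rewrite ?inE.
    by exists a; rewrite ?inE 1?e_sym // setUC.
  case=> y; rewrite inE => xy ->; split; last exact: set21.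
  by apply/edge_setP; exists (x, y).
rewrite card_in_imset // => y y'; rewrite !inE => /adj_neq xy _.
exact: set2_injr.
Qed.

Lemma sum_edge_set_ends (V : nmodType) (h : T -> V) :
  \sum_(f in edge_set e) \sum_(x in f) h x = \sum_x h x *+ deg e x.
Proof.
rewrite (exchange_big_dep predT) //=; apply: eq_bigr => x _.
rewrite sumr_const -card_edges_at; congr (_ *+ _).
by apply: eq_card => f; rewrite !inE.
Qed.

Lemma sqr_sum_edge (R : comNzRingType) (F : T -> R) f : f \in edge_set e ->
  (\sum_(x in f) F x) ^+ 2 = \sum_(x in f) F x ^+ 2 + 2 * \prod_(x in f) F x.
Proof. by case/edge_setP=> p /adj_neq p12 ->; apply: sqr_sum_set2. Qed.

Lemma sum_edge_deg_sub2_sqr (R : comNzRingType) :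
  \sum_(f in edge_set e) (\sum_(x in f) (deg e x)%:R - 2) ^+ 2
  = 4 * (nedges e)%:R - 4 * (M1 e)%:R + 2 * (M2 e)%:R + (Fidx e)%:R :> R.
Proof.
pose d x : R := (deg e x)%:R.
have sum_d : \sum_(f in edge_set e) \sum_(x in f) d x = (M1 e)%:R.
  rewrite sum_edge_set_ends /M1 natr_sum; apply: eq_bigr => x _.
  by rewrite natrX -[LHS]mulr_natr expr2.
have sum_d2 : \sum_(f in edge_set e) \sum_(x in f) d x ^+ 2 = (Fidx e)%:R.
  rewrite sum_edge_set_ends /Fidx natr_sum; apply: eq_bigr => x _.
  by rewrite natrX -[LHS]mulr_natr -exprSr.
have sum_prod : \sum_(f in edge_set e) \prod_(x in f) d x = (M2 e)%:R.
  by rewrite /M2 natr_sum; apply: eq_bigr => f _; rewrite natr_prod.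
transitivity (\sum_(f in edge_set e)
  (\sum_(x in f) d x ^+ 2 + 2 * \prod_(x in f) d x - 4 * \sum_(x in f) d x + 4)).
  by apply: eq_bigr => f fE; rewrite sqrrB sqr_sum_edge //; ring.
rewrite !big_split /= sumrN -!mulr_sumr.
by rewrite sum_d sum_d2 sum_prod sumr_const; ring.
Qed.
End SimpleGraph.

Section LineGraph.
Variables (T : finType) (e : rel T).
Hypotheses (e_sym : symmetric e) (e_irr : irreflexive e).

Lemma line_rel_sym : symmetric (line_rel e).
Proof. by move=> f g; rewrite /line_rel eq_sym disjoint_sym. Qed.

Lemma line_rel_irr : irreflexive (line_rel e).
Proof. by move=> f; rewrite /line_rel eqxx. Qed.

Lemma sum_line_vertex (V : nmodType) (F : {set T} -> V) :
  \sum_(g : line_vertex e) F (val g) = \sum_(f in edge_set e) F f.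
Proof.
rewrite -(big_imset _ (in2W val_inj)) /=.
apply: eq_bigl => f; apply/imsetP/idP => [[g _ ->]|fE]; first exact: valP.
by exists (exist _ f fE).
Qed.

Lemma card_edge_setI f g : f \in edge_set e -> g \in edge_set e ->
  #|f :&: g| = ((f == g) * 2 + ((f != g) && ~~ [disjoint f & g]))%N.
Proof.
move=> fE gE; have [->|fg] := eqVneq f g; first by rewrite setIid (card_edge e_irr).
rewrite -setI_eq0 -cards_eq0.
have := card2_setI_le1 (card_edge e_irr fE) (card_edge e_irr gE) fg.
by case: #|f :&: g| => [|[]].
Qed.

Lemma deg_line_rel (g : line_vertex e) :
  (deg (line_rel e) g + 2 = \sum_(x in val g) deg e x)%N.
Proof.
have -> : \sum_(x in val g) deg e x = \sum_(f in edge_set e) #|f :&: val g|.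
  have card_setI f : #|f :&: val g| = \sum_(x in f) nat_of_bool (x \in val g).
    rewrite -sum1_card big_mkcond [RHS]big_mkcond; apply: eq_bigr => x _.
    by rewrite inE; case: (x \in f).
  under [RHS]eq_bigr do rewrite card_setI.
  rewrite sum_edge_set_ends // [LHS]big_mkcond; apply: eq_bigr => x _.
  by case: (x \in val g); rewrite ?natn ?mul0rn.
have gE := valP g.
under eq_bigr => f fE do rewrite card_edge_setI // eq_sym disjoint_sym.
rewrite big_split /= addnC; congr (_ + _)%N.
  rewrite (bigD1 (val g)) //= eqxx big1 // => f /andP[_ /negbTE].
  by rewrite eq_sym => ->.
rewrite /deg -sum1dep_card big_mkcond -(sum_line_vertex
  (fun f => nat_of_bool ((val g != f) && ~~ [disjoint val g & f]))).
by apply: eq_bigr => h _; rewrite /line_rel; case: (_ && _).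
Qed.

Lemma deg_line_rel_bounds (lo hi : nat) (g : line_vertex e) :
  (forall x, lo <= deg e x <= hi)%N ->
  (2 * lo <= deg (line_rel e) g + 2 <= 2 * hi)%N.
Proof.
move=> deg_bnd; rewrite deg_line_rel.
case/edge_setP: (valP g) => [[u v] /= uv ->]; rewrite big_set2 ?(adj_neq e_irr uv) //=.
have /andP[lo_u u_hi] := deg_bnd u; have /andP[lo_v v_hi] := deg_bnd v.
by rewrite !mul2n -!addnn !leq_add.
Qed.
End LineGraph.

Theorem proposition2p8 (R : rcfType) (T : finType) (e : rel T)
  (Hsym : symmetric e) (Hirr : irreflexive e) (Hnt : nontrivial e)
  (Delta delta : nat)
  (HDle : forall x : T, (deg e x <= Delta)%N) (HDex : exists x : T, deg e x = Delta)
  (Hdge : forall x : T, (delta <= deg e x)%N) (Hdex : exists x : T, deg e x = delta) :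
  Num.min (1 / (4 * (Delta%:R - 1)))
          (Num.sqrt ((Delta%:R - 1) * (delta%:R - 1)) / (Delta%:R + delta%:R - 2) ^+ 2)
    * (4 * (nedges e)%:R - 4 * (M1 e)%:R + 2 * (M2 e)%:R + (Fidx e)%:R)
  <= GA1 R (line_rel e).
Proof.
pose D (g : line_vertex e) : R := (deg (line_rel e) g)%:R.
have D_bnd g : 2 * (delta%:R - 1) <= D g <= 2 * (Delta%:R - 1).
  have /andP[] := deg_line_rel_bounds Hsym Hirr g (fun x => introT andP (conj (Hdge x) (HDle x))).
  by rewrite -!(ler_nat R) !natrD /D => lo hi; apply/andP; split; lra.
rewrite -sum_edge_deg_sub2_sqr // -(sum_line_vertex _
  (fun f => (\sum_(x in f) ((deg e x)%:R : R) - 2) ^+ 2)).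
have -> : \sum_(g : line_vertex e) (\sum_(x in val g) ((deg e x)%:R : R) - 2) ^+ 2
        = \sum_(f in edge_set (line_rel e)) \sum_(g in f) D g.
  rewrite (sum_edge_set_ends (@line_rel_sym _ e) (@line_rel_irr _ e)); apply: eq_bigr => g _.
  by rewrite -natr_sum -deg_line_rel // natrD addrK -[RHS]mulr_natr expr2.
rewrite (_ : Delta%:R + delta%:R - 2 = Delta%:R - 1 + (delta%:R - 1)); last by ring.
rewrite mulr_sumr; apply: ler_sum => f /edge_setP[[g h] /= gh ->].
rewrite !big_set2 ?(adj_neq (@line_rel_irr _ e) gh) //=.
by apply: ga_term_ge; rewrite ?D_bnd // natr_ge0.
Qed.
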